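(* Let $(A,A^* )$ be a left-symmetric bialgebroid, let $(A\oplus A^*,\star,\rho,(\cdot,\cdot)_-)$ be the associated pre-symplectic algebroid (with $\star$, $\rho$, $(\cdot,\cdot)_-$ as below), let $H\in\Gamma(A\otimes A)$, $H^\sharp:A^*\to A$ given by $\langle H^\sharp\xi,\eta\rangle=H(\xi,\eta)$, and let $G_H=\{H^\sharp(\xi)+\xi:\xi\in A^*\}$ be its graph. Then $G_H$ is a Dirac structure of $(A\oplus A^*,\star,\rho,(\cdot,\cdot)_-)$ if and only if $H\in\Gamma(\mathrm{Sym}^2(A))$ and $$\delta_*H-\llbracket H,H\rrbracket=0,$$ where $H\in\Gamma(A\otimes A)$ is regarded as a 2-cochain of the left-symmetric algebroid $A^*$.
   Context: A left-symmetric algebroid is a vector bundle $A\to M$ with an $\mathbb R$-bilinear multiplication $\cdot_A$ on $\Gamma(A)$ with $x\cdot_A(y\cdot_Az)-(x\cdot_Ay)\cdot_Az$ symmetric in $x,y$, and an anchor $a_A$ with $x\cdot_A(fy)=f(x\cdot_Ay)+a_A(x)(f)y$, $(fx)\cdot_Ay=f(x\cdot_Ay)$; $[x,y]_A=x\cdot_Ay-y\cdot_Ax$; $d$ the differential of $(A,[\cdot,\cdot]_A,a_A)$; $\langle\mathcal L_x\xi,y\rangle=a_A(x)\langle\xi,y\rangle-\langle\xi,[x,y]_A\rangle$, $\langle R_x\xi,y\rangle=-\langle\xi,y\cdot_Ax\rangle$; analogous $[\cdot,\cdot]_{A^*}$, $d_*$ ($\langle d_*f,\xi\rangle=a_{A^*}(\xi)f$),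 $\mathcal L_\xi x$, $\langle R_\xi x,\eta\rangle=-\langle x,\eta\cdot_{A^*}\xi\rangle$ for $A^*$. Coboundary of $A$: $C^{n+1}(A)=\Gamma(\wedge^nA^*\otimes A^* )$, $\delta\varphi(x_1,\dots,x_{n+1})=\sum_{i=1}^n(-1)^{i+1}a_A(x_i)\varphi(\dots,\hat{x_i},\dots,x_{n+1})-\sum_{i=1}^n(-1)^{i+1}\varphi(\dots,\hat{x_i},\dots,x_n,x_i\cdot_Ax_{n+1})+\sum_{i<j\le n}(-1)^{i+j}\varphi([x_i,x_j]_A,\dots,\hat{x_i},\dots,\hat{x_j},\dots,x_{n+1})$; $\delta_*$ is the same for $A^*$ (acting on $\Gamma(\wedge^nA\otimes A)$). $\mathfrak L_x(y_1\otimes y_2)=(x\cdot_Ay_1)\otimes y_2+y_1\otimes[x,y_2]_A$, similarly $\mathfrak L_\xi$. $(A,A^* )$ is a left-symmetric bialgebroid if $\delta[\xi,\eta]_{A^*}=\mathfrak L_\xi\delta\eta-\mathfrak L_\eta\delta\xi$ and $\delta_*[x,y]_A=\mathfrak L_x\delta_*y-\mathfrak L_y\delta_*x$. The associated structure on $A\oplus A^*$: $e_1\star e_2=(x_1\cdot_Ax_2+\mathcal L_{\xi_1}x_2-R_{\xi_2}x_1-\frac12d_*(e_1,e_2)_+)+(\xi_1\cdot_{A^*}\xi_2+\mathcal L_{x_1}\xi_2-R_{x_2}\xi_1-\frac12d(e_1,e_2)_+)$ for $e_i=x_i+\xi_i$; $\rho(x+\xi)=a_A(x)+a_{A^*}(\xi)$;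 $(x+\xi,y+\eta)_\pm=\langle\xi,y\rangle\pm\langle\eta,x\rangle$. A Dirac structure is a subbundle maximal isotropic for $(\cdot,\cdot)_-$ whose sections are closed under $\star$. For $H\in\Gamma(\mathrm{Sym}^2(A))$ (symmetric elements of $A\otimes A$), $\llbracket H,H\rrbracket\in\Gamma(\wedge^2A\otimes A)$ is $\llbracket H,H\rrbracket(\xi_1,\xi_2,\xi_3)=a_A(H^\sharp\xi_1)\langle H^\sharp\xi_2,\xi_3\rangle-a_A(H^\sharp\xi_2)\langle H^\sharp\xi_1,\xi_3\rangle+\langle\xi_1,H^\sharp\xi_2\cdot_AH^\sharp\xi_3\rangle-\langle\xi_2,H^\sharp\xi_1\cdot_AH^\sharp\xi_3\rangle-\langle\xi_3,[H^\sharp\xi_1,H^\sharp\xi_2]_A\rangle$. *)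

(* Algebraic (Serre--Swan) model of vector bundles:
   functions on M = a commutative K-algebra C (K a number field, e.g. R),
   Gamma(A) = VA, Gamma(A^* ) = VB : C-modules in perfect duality via
   pair : VA -> VB -> C,  pair x xi = <xi, x>. *)
From HB Require Import structures.
From mathcomp Require Import all_boot all_order all_algebra.
Set Implicit Arguments. Unset Strict Implicit. Unset Printing Implicit Defensive.
Import Order.TTheory GRing.Theory Num.Theory.
Local Open Scope ring_scope.

Section Defs.
Variables (K : numFieldType) (C : comAlgType K).

(* a vector field on M = an R-linear derivation of C^oo(M) *)
Definition is_derivation (D : C -> C) : Prop :=
  (forall (k : K) (f g : C), D (k *: f + g) = k *: D f + D g) /\
  (forall f g : C, D (f * g) = f * D g + g * D f).

Definition Clinear (U V : lmodType C) (phi : U -> V) : Prop :=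
  forall (c : C) (x y : U), phi (c *: x + y) = c *: phi x + phi y.

Definition Clinear_form (U : lmodType C) (phi : U -> C) : Prop :=
  forall (c : C) (x y : U), phi (c *: x + y) = c * phi x + phi y.

Variables (VA VB : lmodType C) (pair : VA -> VB -> C).

Definition perfect_pairing : Prop :=
  (((forall xi : VB, Clinear_form (fun x => pair x xi))) /\
     ((forall x : VA, Clinear_form (pair x))) /\
     ((forall x : VA, (forall xi, pair x xi = 0) -> x = 0)) /\
     ((forall xi : VB, (forall x, pair x xi = 0) -> xi = 0)) /\
     ((forall phi : VA -> C, Clinear_form phi ->
          exists xi : VB, forall x, phi x = pair x xi)) /\
     ((forall phi : VB -> C, Clinear_form phi ->
          exists x : VA, forall xi, phi xi = pair x xi))).

Definition left_symmetric_algebroid (V : lmodType C)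
    (mul : V -> V -> V) (anc : V -> C -> C) : Prop :=
  (((forall (k : K) (x y z : V),
         mul ((k%:A : C) *: x + y) z = (k%:A : C) *: mul x z + mul y z
      /\ mul z ((k%:A : C) *: x + y) = (k%:A : C) *: mul z x + mul z y)) /\
     ((forall x y z : V,
         mul x (mul y z) - mul (mul x y) z = mul y (mul x z) - mul (mul y x) z)) /\
     ((forall (f : C) (x y : V), mul x (f *: y) = f *: mul x y + anc x f *: y)) /\
     ((forall (f : C) (x y : V), mul (f *: x) y = f *: mul x y)) /\
     ((forall (f g : C) (x y : V), anc (f *: x + y) g = f * anc x g + anc y g)) /\
     ((forall x : V, is_derivation (anc x)))).

Definition brk (V : lmodType C) (mul : V -> V -> V) (x y : V) : V :=
  mul x y - mul y x.

End Defs.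

Section Bialg.
Variables (K : numFieldType) (C : comAlgType K) (VA VB : lmodType C)
  (pair : VA -> VB -> C)
  (mulA : VA -> VA -> VA) (aA : VA -> C -> C)
  (mulB : VB -> VB -> VB) (aB : VB -> C -> C)
  (LA : VA -> VB -> VB) (RA : VA -> VB -> VB) (dA : C -> VB)
  (LB : VB -> VA -> VA) (RB : VB -> VA -> VA) (dB : C -> VA).

(* characterisation of  L_x xi, R_x xi, d f, L_xi x, R_xi x, d_* f
   (unique by nondegeneracy of the pairing) *)
Definition dual_operators : Prop :=
  (((forall (x y : VA) (xi : VB),
         pair y (LA x xi) = aA x (pair y xi) - pair (brk mulA x y) xi)) /\
     ((forall (x y : VA) (xi : VB), pair y (RA x xi) = - pair (mulA y x) xi)) /\
     ((forall (f : C) (x : VA), pair x (dA f) = aA x f)) /\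
     ((forall (xi eta : VB) (x : VA),
         pair (LB xi x) eta = aB xi (pair x eta) - pair x (brk mulB xi eta))) /\
     ((forall (xi eta : VB) (x : VA), pair (RB xi x) eta = - pair x (mulB eta xi))) /\
     ((forall (f : C) (xi : VB), pair (dB f) xi = aB xi f))).

(* coboundaries of 1-cochains, as bilinear functions *)
Definition deltaA (eta : VB) (x1 x2 : VA) : C :=
  aA x1 (pair x2 eta) - pair (mulA x1 x2) eta.
Definition deltaB (y : VA) (xi1 xi2 : VB) : C :=
  aB xi1 (pair y xi2) - pair y (mulB xi1 xi2).

(* frak L_xi acting on T in Gamma(A^* (x) A^* ), T seen as a bilinear
   function on A x A:  (frak L_xi T)(x1,x2) =
   a_{A^*}(xi) T(x1,x2) - T(l_xi x1, x2) - T(x1, L_xi x2),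
   where l_xi = L_xi + R_xi is the dual of left multiplication xi .A^* _ *)
Definition frakLB (xi : VB) (T : VA -> VA -> C) (x1 x2 : VA) : C :=
  aB xi (T x1 x2) - T (LB xi x1 + RB xi x1) x2 - T x1 (LB xi x2).
Definition frakLA (x : VA) (T : VB -> VB -> C) (xi1 xi2 : VB) : C :=
  aA x (T xi1 xi2) - T (LA x xi1 + RA x xi1) xi2 - T xi1 (LA x xi2).

Definition left_symmetric_bialgebroid : Prop :=
  ((perfect_pairing pair) /\
     (left_symmetric_algebroid mulA aA) /\
     (left_symmetric_algebroid mulB aB) /\
     (dual_operators) /\
     ((forall (xi eta : VB) (x1 x2 : VA),
         deltaA (brk mulB xi eta) x1 x2
         = frakLB xi (deltaA eta) x1 x2 - frakLB eta (deltaA xi) x1 x2)) /\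
     ((forall (x y : VA) (xi1 xi2 : VB),
         deltaB (brk mulA x y) xi1 xi2
         = frakLA x (deltaB y) xi1 xi2 - frakLA y (deltaB x) xi1 xi2))).

Definition pairing_plus (e1 e2 : VA * VB) : C :=
  pair e2.1 e1.2 + pair e1.1 e2.2.
Definition pairing_minus (e1 e2 : VA * VB) : C :=
  pair e2.1 e1.2 - pair e1.1 e2.2.

Definition half : C := ((2 : K)^-1)%:A.

Definition star (e1 e2 : VA * VB) : VA * VB :=
  (mulA e1.1 e2.1 + LB e1.2 e2.1 - RB e2.2 e1.1 - half *: dB (pairing_plus e1 e2),
   mulB e1.2 e2.2 + LA e1.1 e2.2 - RA e2.1 e1.2 - half *: dA (pairing_plus e1 e2)).

(* Dirac structure: a subbundle (C-submodule) which is maximal isotropic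
   (Lagrangian: L = L^perp) for (.,.)_- and closed under star *)
Definition dirac_structure (L : VA * VB -> Prop) : Prop :=
  ((L (0, 0)) /\
     ((forall (c : C) e1 e2, L e1 -> L e2 -> L (c *: e1.1 + e2.1, c *: e1.2 + e2.2))) /\
     ((forall e1 e2, L e1 -> L e2 -> pairing_minus e1 e2 = 0)) /\
     ((forall e, (forall l, L l -> pairing_minus e l = 0) -> L e)) /\
     ((forall e1 e2, L e1 -> L e2 -> L (star e1 e2)))).

Definition graph (Hs : VB -> VA) (e : VA * VB) : Prop := e.1 = Hs e.2.

Definition Hform (Hs : VB -> VA) (xi eta : VB) : C := pair (Hs xi) eta.

Definition symmetric2 (Hs : VB -> VA) : Prop :=
  forall xi eta, Hform Hs xi eta = Hform Hs eta xi.

Definition deltaB2 (Hs : VB -> VA) (xi1 xi2 xi3 : VB) : C :=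
  aB xi1 (Hform Hs xi2 xi3) - aB xi2 (Hform Hs xi1 xi3)
  - Hform Hs xi2 (mulB xi1 xi3) + Hform Hs xi1 (mulB xi2 xi3)
  - Hform Hs (brk mulB xi1 xi2) xi3.

Definition dbracket (Hs : VB -> VA) (xi1 xi2 xi3 : VB) : C :=
  aA (Hs xi1) (pair (Hs xi2) xi3) - aA (Hs xi2) (pair (Hs xi1) xi3)
  + pair (mulA (Hs xi2) (Hs xi3)) xi1 - pair (mulA (Hs xi1) (Hs xi3)) xi2
  - pair (brk mulA (Hs xi1) (Hs xi2)) xi3.

End Bialg.

(* For a symmetric H the graph G_H is automatically a C-submodule and Lagrangian for
   (.,.)_-: isotropy is exactly the symmetry of H, and maximality follows from the
   nondegeneracy of the pairing.  So everything rests on closedness under the product.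
   For graph elements e_xi = H^sharp xi + xi and e_eta, the defect
   <(e_xi * e_eta)_A - H^sharp (e_xi * e_eta)_{A^*}, zeta> expands, via the dual
   characterisations of L, R, d and the symmetry of H, to
   (delta_* H - [[H, H]])(xi, zeta, eta); the two halves of d (e_xi, e_eta)_+ recombine
   since (e_xi, e_eta)_+ = 2 H(xi, eta). *)
From Pilot Require Import Defs.
From mathcomp Require Import all_boot all_order all_algebra.
From mathcomp Require Import ring.
Import GRing.Theory Num.Theory.
Set Implicit Arguments. Unset Strict Implicit. Unset Printing Implicit Defensive.
Local Open Scope ring_scope.

Section ClinearForm.
Variables (K : numFieldType) (C : comAlgType K) (V : lmodType C) (phi : V -> C).
Hypothesis phi_lin : Clinear_form phi.

Lemma clinear_form0 : phi 0 = 0.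
Proof.
have := phi_lin 1 0 0; rewrite scaler0 addr0 mul1r => phi00.
by apply: (addrI (phi 0)); rewrite addr0 -phi00.
Qed.

Lemma clinear_formD x y : phi (x + y) = phi x + phi y.
Proof. by have := phi_lin 1 x y; rewrite scale1r mul1r. Qed.

Lemma clinear_formZ c x : phi (c *: x) = c * phi x.
Proof. by have := phi_lin c x 0; rewrite !addr0 clinear_form0 addr0. Qed.

Lemma clinear_formN x : phi (- x) = - phi x.
Proof. by rewrite -scaleN1r clinear_formZ mulN1r. Qed.

Lemma clinear_formB x y : phi (x - y) = phi x - phi y.
Proof. by rewrite clinear_formD clinear_formN. Qed.

End ClinearForm.

Section Clinear.
Variables (K : numFieldType) (C : comAlgType K) (V W : lmodType C) (phi : V -> W).
Hypothesis phi_lin : Clinear phi.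

Lemma clinear0 : phi 0 = 0.
Proof.
have := phi_lin 1 0 0; rewrite scaler0 addr0 scale1r => phi00.
by apply: (addrI (phi 0)); rewrite addr0 -phi00.
Qed.

End Clinear.

Lemma derivationD (K : numFieldType) (C : comAlgType K) (D : C -> C) f g :
  is_derivation D -> D (f + g) = D f + D g.
Proof. by case=> lin _; have := lin 1 f g; rewrite !scale1r. Qed.

Lemma half_double (K : numFieldType) (C : comAlgType K) (g : C) :
  Defs.half C * (g + g) = g.
Proof.
have halves : (2^-1 + 2^-1 : K) = 1 by rewrite [RHS]splitr mul1r.
by rewrite /Defs.half mulr_algl scalerDr -scalerDl halves scale1r.
Qed.

Section GraphDirac.
Variables (K : numFieldType) (C : comAlgType K) (VA VB : lmodType C)
  (pair : VA -> VB -> C)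
  (mulA : VA -> VA -> VA) (aA : VA -> C -> C)
  (mulB : VB -> VB -> VB) (aB : VB -> C -> C)
  (LA : VA -> VB -> VB) (RA : VA -> VB -> VB) (dA : C -> VB)
  (LB : VB -> VA -> VA) (RB : VB -> VA -> VA) (dB : C -> VA).
Hypothesis pair_linl : forall xi, Clinear_form (fun x => pair x xi).
Hypothesis pair_linr : forall x, Clinear_form (pair x).
Hypothesis pair_nondeg : forall x, (forall xi, pair x xi = 0) -> x = 0.
Hypothesis aA_der : forall x, is_derivation (aA x).
Hypothesis aB_der : forall xi, is_derivation (aB xi).
Hypothesis duals : dual_operators pair mulA aA mulB aB LA RA dA LB RB dB.
Variable Hs : VB -> VA.

Local Notation starAB := (star pair mulA mulB LA RA dA LB RB dB).
Local Notation G := (graph Hs).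

Let pairDl x y z : pair (x + y) z = pair x z + pair y z.
Proof. exact: (clinear_formD (pair_linl z)). Qed.
Let pairBl x y z : pair (x - y) z = pair x z - pair y z.
Proof. exact: (clinear_formB (pair_linl z)). Qed.
Let pairZl c x z : pair (c *: x) z = c * pair x z.
Proof. exact: (clinear_formZ (pair_linl z)). Qed.
Let pairNl x z : pair (- x) z = - pair x z.
Proof. exact: (clinear_formN (pair_linl z)). Qed.
Let pairDr x y z : pair z (x + y) = pair z x + pair z y.
Proof. exact: (clinear_formD (pair_linr z)). Qed.
Let pairZr c x z : pair z (c *: x) = c * pair z x.
Proof. exact: (clinear_formZ (pair_linr z)). Qed.
Let pairNr x z : pair z (- x) = - pair z x.
Proof. exact: (clinear_formN (pair_linr z)). Qed.

Lemma graph0 : Clinear Hs -> G (0, 0).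
Proof. by move=> Hs_lin; rewrite /graph /= clinear0. Qed.

Lemma graph_lincomb : Clinear Hs ->
  forall c e1 e2, G e1 -> G e2 -> G (c *: e1.1 + e2.1, c *: e1.2 + e2.2).
Proof. by move=> Hs_lin c e1 e2; rewrite /graph /= Hs_lin => -> ->. Qed.

Lemma graphP e : G e <-> forall zeta, pair e.1 zeta - pair (Hs e.2) zeta = 0.
Proof.
split=> [-> zeta|defect]; first by rewrite subrr.
by apply/eqP; rewrite -subr_eq0; apply/eqP/pair_nondeg => zeta; rewrite pairBl.
Qed.

Lemma graph_isotropicP :
  (forall e1 e2, G e1 -> G e2 -> pairing_minus pair e1 e2 = 0) <-> symmetric2 pair Hs.
Proof.
split=> [iso xi eta|sym [x xi] [y eta] Gx Gy].
  by have /eqP := iso (Hs eta, eta) (Hs xi, xi) erefl erefl; rewrite subr_eq0 => /eqP.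
by rewrite [x]Gx [y]Gy /pairing_minus /= [pair (Hs xi) eta]sym subrr.
Qed.

Lemma graph_coisotropic : symmetric2 pair Hs ->
  forall e, (forall l, G l -> pairing_minus pair e l = 0) -> G e.
Proof.
move=> sym e orth; apply/graphP => eta.
have := orth (Hs eta, eta) erefl; rewrite /pairing_minus /= => orth_eta.
by rewrite [pair (Hs _) _]sym -opprB orth_eta oppr0.
Qed.

Lemma star_graph_defect : symmetric2 pair Hs -> forall xi eta zeta,
  pair (starAB (Hs xi, xi) (Hs eta, eta)).1 zeta
  - pair (Hs (starAB (Hs xi, xi) (Hs eta, eta)).2) zeta
  = deltaB2 pair mulB aB Hs xi zeta eta - dbracket pair mulA aA Hs xi zeta eta.
Proof.
case: duals => [dLA [dRA [ddA [dLB [dRB ddB]]]]] sym xi eta zeta.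
have symH a b : pair (Hs a) b = pair (Hs b) a by exact: sym.
rewrite symH /star /= /pairing_plus /=.
rewrite !(pairDl, pairZl, pairNl, pairDr, pairZr, pairNr).
rewrite dLB dRB ddB dLA dRA ddA (symH eta xi).
rewrite (derivationD _ _ (aB_der zeta)) (derivationD _ _ (aA_der (Hs zeta))) !half_double.
rewrite /deltaB2 /dbracket /Hform (symH (brk mulB xi zeta)) /brk.
rewrite !(pairDl, pairZl, pairNl, pairDr, pairZr, pairNr).
rewrite (symH zeta eta) (symH zeta (mulB xi eta)).
rewrite (symH eta (mulB zeta xi)) (symH eta (mulB xi zeta)).
ring.
Qed.

Lemma graph_star_closedP : symmetric2 pair Hs ->
  (forall e1 e2, G e1 -> G e2 -> G (starAB e1 e2)) <->
  (forall xi1 xi2 xi3,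
     deltaB2 pair mulB aB Hs xi1 xi2 xi3 - dbracket pair mulA aA Hs xi1 xi2 xi3 = 0).
Proof.
move=> sym; split=> [closed xi1 xi2 xi3|maurer_cartan [x xi] [y eta] Gx Gy].
  rewrite -star_graph_defect //.
  by have /graphP := closed (Hs xi1, xi1) (Hs xi3, xi3) erefl erefl; apply.
rewrite [x]Gx [y]Gy.
by apply/graphP => zeta; rewrite star_graph_defect.
Qed.

End GraphDirac.

Theorem mainTheorem15 (K : numFieldType) (C : comAlgType K) (VA VB : lmodType C)
  (pair : VA -> VB -> C)
  (mulA : VA -> VA -> VA) (aA : VA -> C -> C)
  (mulB : VB -> VB -> VB) (aB : VB -> C -> C)
  (LA : VA -> VB -> VB) (RA : VA -> VB -> VB) (dA : C -> VB)
  (LB : VB -> VA -> VA) (RB : VB -> VA -> VA) (dB : C -> VA)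
  (Hbialg : left_symmetric_bialgebroid pair mulA aA mulB aB LA RA dA LB RB dB)
  (Hs : VB -> VA) (HsLin : Clinear Hs) :
  dirac_structure pair mulA mulB LA RA dA LB RB dB (graph Hs) <->
  (symmetric2 pair Hs /\
   forall xi1 xi2 xi3 : VB,
     deltaB2 pair mulB aB Hs xi1 xi2 xi3 - dbracket pair mulA aA Hs xi1 xi2 xi3 = 0).
Proof.
case: Hbialg => [[linl [linr [nondeg _]]] [[_ [_ [_ [_ [_ derA]]]]]]].
case=> [[_ [_ [_ [_ [_ derB]]]]] [duals _]].
have closedP := graph_star_closedP linl linr nondeg derA derB duals.
split=> [[_ [_ [iso [_ closed]]]]|[sym maurer_cartan]].
  have sym : symmetric2 pair Hs by exact/graph_isotropicP.
  by split=> //; apply/closedP.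
split; first exact: graph0.
split; first exact: graph_lincomb.
split; first exact/graph_isotropicP.
split; first exact: graph_coisotropic.
exact/closedP.
Qed.
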